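(* Let $\mathfrak g(V,\omega,D)$ be a generalized oscillator algebra satisfying (C1) $Q(x,y):=\omega(Dx,y)$ is positive definite, (C2) all functionals $\omega(x,\cdot)$, $x\in V$, are $Q$-continuous, and (C3) the map $\eta:V\to V_Q$, $Q(\eta(x),y)=\omega(x,y)$, is continuous, where $V_Q$ is the Hilbert completion of $(V,Q)$ containing $V$ as a dense subspace. Put $\kappa(x,y):=Q(\eta(x),\eta(y))$ for $x,y\in V$, and let $\overline D$ denote the closure in $V_Q$ of $D$ regarded as an unbounded operator with domain $V$. Then $\eta(V)$ lies in the domain of $\overline D$, the map $\eta:(V,\kappa)\to(\eta(V),Q)$ is isometric and extends to an isomorphism $\hat\eta:V_\kappa\to V_Q$ of real Hilbert spaces, and $\eta$ intertwines the unbounded operator $D:V\to V_\kappa$ with the operator $\overline D|_{\eta(V)}=\eta^{-1}:\eta(V)\to V\subseteq V_Q$. Moreover, the closure of $D$ in $V_\kappa$ is injective with dense range.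
   Context: $(V,\omega)$: real locally convex space with continuous non-degenerate alternating form $\omega$; $\gamma:\mathbb R\to\mathrm{Sp}(V,\omega)$ defines a smooth action, $D=\gamma'(0)$; $\mathfrak g(V,\omega,D)=\mathbb R\times V\times\mathbb R$ with bracket $[(z,v,t),(z',v',t')]=(\omega(v,v'),tDv'-t'Dv,0)$. A linear form $\beta$ on $V$ is $Q$-continuous if $\sup\{\beta(v):Q(v,v)\le1\}<\infty$. $V_\kappa$ denotes the Hilbert completion of $(V,\kappa)$. *)

From HB Require Import structures.
From mathcomp Require Import all_boot all_order all_algebra.
From mathcomp Require Import all_classical all_reals all_analysis.
Import Order.TTheory GRing.Theory Num.Theory.
Set Implicit Arguments. Unset Strict Implicit. Unset Printing Implicit Defensive.
Local Open Scope classical_set_scope.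
Local Open Scope ring_scope.

(** Bastiani C^k maps between (locally convex) topological vector spaces,
    defined via the tangent map: f is C^0 if continuous; f is C^(k+1) if it is
    continuous, all directional derivatives
      df(x,h) = lim_{t -> 0, t <> 0} t^-1 (f (x + t h) - f x)
    exist, and df : E x E -> F is C^k. *)
Fixpoint Ck (R : realType) (k : nat) : forall (E F : tvsType R), (E -> F) -> Prop :=
  match k with
  | 0 => fun E F f => continuous f
  | k.+1 => fun E F f => continuous f /\
      exists df : (E * E)%type -> F,
        (forall x h, (fun t : R => t^-1 *: (f (x + t *: h) - f x)) @ 0^' --> df (x, h))
        /\ @Ck R k (E * E)%type F df
  end.

Definition smooth (R : realType) (E F : tvsType R) (f : E -> F) : Prop :=
  forall k, Ck k f.

Definition symplectic_form (R : realType) (V : tvsType R) (omega : V -> V -> R) : Prop :=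
  [/\ (forall a x y z, omega (a *: x + y) z = a * omega x z + omega y z),
      (forall a x y z, omega z (a *: x + y) = a * omega z x + omega z y),
      (forall x, omega x x = 0),
      continuous (fun p : V * V => (omega p.1 p.2 : R^o))
    & (forall x, (forall y, omega x y = 0) -> x = 0)].

(** gamma : R -> Sp(V, omega) is a group homomorphism into the continuous linear
    omega-preserving maps (invertibility follows from the group law) and the
    action map R x V -> V, (t,v) |-> gamma t v, is smooth. *)
Definition smooth_symplectic_action (R : realType) (V : tvsType R)
    (omega : V -> V -> R) (gamma : R -> V -> V) : Prop :=
  [/\ (forall t a x y, gamma t (a *: x + y) = a *: gamma t x + gamma t y),
      (forall t, continuous (gamma t)) /\
      (forall t x y, omega (gamma t x) (gamma t y) = omega x y),
      (forall x, gamma 0 x = x),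
      (forall s t x, gamma (s + t) x = gamma s (gamma t x))
    & smooth (fun p : (R^o * V)%type => gamma p.1 p.2)].

Definition is_generator (R : realType) (V : tvsType R) (gamma : R -> V -> V)
    (D : V -> V) : Prop :=
  forall x, (fun t : R => t^-1 *: (gamma t x - x)) @ 0^' --> D x.

Definition Qform (R : realType) (V : tvsType R) (omega : V -> V -> R) (D : V -> V)
  (x y : V) : R := omega (D x) y.

Definition Q_continuous (R : realType) (V : Type) (Q : V -> V -> R) (beta : V -> R) : Prop :=
  exists M : R, forall v, Q v v <= 1 -> beta v <= M.

Definition inner_product (R : realType) (H : normedModType R) (ip : H -> H -> R) : Prop :=
  [/\ (forall a u v w, ip (a *: u + v) w = a * ip u w + ip v w),
      (forall u v, ip u v = ip v u)
    & (forall u, ip u u = `|u| ^+ 2)].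

(** (H, ip) is a real Hilbert space and iota : V -> H a linear map identifying
    (V, B) with a dense subspace of H: H is "the" Hilbert completion of (V,B). *)
Definition hilbert_completion (R : realType) (V : lmodType R) (B : V -> V -> R)
    (H : completeNormedModType R) (ip : H -> H -> R) (iota : V -> H) : Prop :=
  [/\ inner_product ip,
      (forall a x y, iota (a *: x + y) = a *: iota x + iota y),
      (forall x y, ip (iota x) (iota y) = B x y)
    & closure (range iota) = setT].

Definition closed_graph (V : Type) (H1 H2 : topologicalType)
    (iota1 : V -> H1) (iota2 : V -> H2) (T : V -> V) : set (H1 * H2) :=
  closure (range (fun x => (iota1 x, iota2 (T x)))).

Definition is_graph (H1 H2 : Type) (G : set (H1 * H2)) : Prop :=
  forall a b c, G (a, b) -> G (a, c) -> b = c.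

Definition op_range (H1 H2 : Type) (G : set (H1 * H2)) : set H2 :=
  [set b | exists a, G (a, b)].

Definition kappa (R : realType) (V H : Type) (ip : H -> H -> R) (eta : V -> H)
  (x y : V) : R := ip (eta x) (eta y).

(* D is skew for Q because gamma preserves omega.  For r orthogonal in V_Q to
   the range of D + s (s <> 0), the orbit function t |-> Q(r, gamma_t y) is a
   bounded solution of f' = -s f, hence zero; so D + 1 and D - 1 have dense
   range.  A minimizing sequence for the distance to the range of D - 1 then
   yields, for every w in V_Q, a point (u, v) of the graph of the closure of D
   with v - u = w; taking w = x - eta x and using Q(eta x, D y) = -Q(x, y)
   gives (eta x, x) in that graph.  Since eta (D x) = x and eta is isometric
   from kappa to Q, eta extends to a unitary V_kappa -> V_Q under which D has
   dense range in V_kappa, and skewness makes its closure injective. *)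

From HB Require Import structures.
From mathcomp Require Import all_boot all_order all_algebra.
From mathcomp Require Import all_classical all_reals all_analysis.
From mathcomp Require Import ring lra.
Import Order.TTheory GRing.Theory Num.Theory.
Import numFieldNormedType.Exports.
Local Open Scope classical_set_scope.
Local Open Scope ring_scope.
Set Implicit Arguments. Unset Strict Implicit. Unset Printing Implicit Defensive.

Section LinearMap.
Context (R : realType) (U W : lmodType R) (f : U -> W).
Hypothesis f_lin : forall a x y, f (a *: x + y) = a *: f x + f y.

Lemma lin0 : f 0 = 0.
Proof.
have := f_lin 1 0 0; rewrite scaler0 addr0 scale1r => /(congr1 (fun v => v - f 0)).
by rewrite subrr addrK.
Qed.

Lemma linD x y : f (x + y) = f x + f y.
Proof. by have := f_lin 1 x y; rewrite !scale1r. Qed.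

Lemma linZ a x : f (a *: x) = a *: f x.
Proof. by rewrite -[a *: x]addr0 f_lin lin0 addr0. Qed.

Lemma linB x y : f (x - y) = f x - f y.
Proof. by rewrite linD -scaleN1r linZ scaleN1r. Qed.

End LinearMap.

Section Sequences.
Context {R : realType}.

Lemma natinv_near (e : R) : 0 < e -> \forall n \near \oo, n.+1%:R^-1 < e.
Proof. by move=> e0; apply: (near_infty_natSinv_lt (PosNum e0)). Qed.

Lemma natinv_le (n N : nat) : (N <= n)%N -> n.+1%:R^-1 <= N.+1%:R^-1 :> R.
Proof. by move=> h; rewrite lef_pV2 ?posrE // ler_nat ltnS. Qed.

Lemma natinv_le1 (n : nat) : n.+1%:R^-1 <= 1 :> R.
Proof. by rewrite invf_le1 // ler1n. Qed.

Lemma closure_seq (T : normedModType R) (A : set T) p :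
  closure A p -> exists u : nat -> T, (forall n, A (u n)) /\ u @ \oo --> p.
Proof.
move=> cl.
have : forall n : nat, exists x, A x /\ `|p - x| < n.+1%:R^-1.
  move=> n; have [x [Ax bx]] := cl _ (nbhsx_ballx p (n.+1%:R^-1 : R) ltac:(by [])).
  by exists x; split => //; move: bx; rewrite -ball_normE.
move=> /choice[u hu]; exists u; split; first by move=> n; case: (hu n).
apply/cvgrPdist_lt => e e0.
near=> n; apply: (lt_trans (proj2 (hu n))).
by near: n; apply: natinv_near.
Unshelve. all: by end_near. Qed.

Lemma dense_seq (T : normedModType R) (I : Type) (io : I -> T) :
  closure (range io) = setT ->
  forall u : T, exists xs : nat -> I, (fun n => io (xs n)) @ \oo --> u.
Proof.
move=> io_dense u; have : closure (range io) u by rewrite io_dense.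
move=> /closure_seq [v [hv vu]].
have /choice [xs hxs] : forall n, exists x, io x = v n.
  by move=> n; have [x _ <-] := hv n; exists x.
by exists xs; under eq_fun do rewrite hxs.
Qed.

Lemma seq_closure (T : topologicalType) (A : set T) (u : nat -> T) p :
  (forall n, A (u n)) -> u @ \oo --> p -> closure A p.
Proof.
move=> Au up; apply: (closed_cvg (closure A) (@closed_closure _ A) _ p up).
by near=> n; apply: subset_closure.
Unshelve. all: by end_near. Qed.

Lemma lim_ge (u : nat -> R) (l c : R) :
  u @ \oo --> l -> (forall n, c <= u n) -> c <= l.
Proof.
move=> ul hc; apply: (closed_cvg [set x | c <= x] (@closed_ge _ c) _ l ul).
by near=> n; apply: hc.
Unshelve. all: by end_near. Qed.

Lemma lim_le_from (u : nat -> R) (l c : R) (k : nat) :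
  u @ \oo --> l -> (forall n, (k <= n)%N -> u n <= c) -> l <= c.
Proof.
move=> ul hc; apply: (closed_cvg [set x | x <= c] (@closed_le _ c) _ l ul).
by exists k => // n /= kn; apply: hc.
Qed.

Definition cauchy_seq (T : normedModType R) (u : nat -> T) :=
  forall e, 0 < e ->
  exists N, forall n m, (N <= n)%N -> (N <= m)%N -> `|u n - u m| < e.

Lemma cauchy_seq_cvg (T : completeNormedModType R) (u : nat -> T) :
  cauchy_seq u -> cvg (u @ \oo).
Proof.
move=> hc; apply/cauchy_cvgP/cauchy_ballP => e e0.
have [N hN] := hc e e0; rewrite near_simpl.
exists ([set n | (N <= n)%N], [set n | (N <= n)%N]); first by split; exists N.
by move=> [n m] /= [Nn Nm]; rewrite -ball_normE /ball_ /=; apply: hN.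
Qed.

Lemma cvg_cauchy_seq (T : normedModType R) (u : nat -> T) (l : T) :
  u @ \oo --> l -> cauchy_seq u.
Proof.
move=> /cvgrPdist_lt ul e e0.
have [N _ hN] := ul (e / 2) ltac:(by rewrite divr_gt0).
exists N => n m Nn Nm.
have := hN n Nn; have := hN m Nm => /= h1 h2.
rewrite (_ : u n - u m = (l - u m) - (l - u n)); last first.
  by rewrite opprB [RHS]addrC addrA subrK.
by apply: (le_lt_trans (ler_normB _ _)); lra.
Qed.

Lemma cvg_dominated (T1 : normedModType R) (T2 : completeNormedModType R)
    (f : nat -> T1) (g : nat -> T2) (l : T1) :
  f @ \oo --> l -> (forall n m, `|g n - g m| <= `|f n - f m|) -> cvg (g @ \oo).
Proof.
move=> fl hle; apply: cauchy_seq_cvg => e e0.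
have [N hN] := cvg_cauchy_seq fl e0.
by exists N => n m Nn Nm; apply: le_lt_trans (hle n m) (hN n m Nn Nm).
Qed.

End Sequences.

Section InnerProduct.
Context (R : realType) (H : normedModType R) (ip : H -> H -> R).
Hypothesis Hip : inner_product ip.

Lemma ipC u v : ip u v = ip v u.
Proof. by case: Hip. Qed.

Lemma ipxx u : ip u u = `|u| ^+ 2.
Proof. by case: Hip. Qed.

Lemma ipDl u v w : ip (u + v) w = ip u w + ip v w.
Proof. by case: Hip => lin _ _; rewrite -[u]scale1r lin mul1r scale1r. Qed.

Lemma ipZl a u w : ip (a *: u) w = a * ip u w.
Proof.
case: Hip => lin _ _; have := lin 1 0 0 w; rewrite scaler0 addr0 mul1r => ip0.
by rewrite -[a *: u]addr0 lin (_ : ip 0 w = 0) ?addr0 //; lra.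
Qed.

Lemma ipBl u v w : ip (u - v) w = ip u w - ip v w.
Proof. by rewrite ipDl -scaleN1r ipZl mulN1r. Qed.

Lemma ipDr u v w : ip w (u + v) = ip w u + ip w v.
Proof. by rewrite ipC ipDl !(ipC w). Qed.

Lemma ipZr a u w : ip w (a *: u) = a * ip w u.
Proof. by rewrite ipC ipZl ipC. Qed.

Lemma ipBr u v w : ip w (u - v) = ip w u - ip w v.
Proof. by rewrite ipC ipBl !(ipC w). Qed.

Lemma ip0l w : ip 0 w = 0.
Proof. by rewrite -(subrr w) ipBl subrr. Qed.

Lemma ip_eq0 u : ip u u = 0 -> u = 0.
Proof. by rewrite ipxx => /eqP; rewrite expf_eq0 /= normr_eq0 => /eqP. Qed.

Lemma normD2 u v : `|u + v| ^+ 2 = `|u| ^+ 2 + 2 * ip u v + `|v| ^+ 2.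
Proof. by rewrite -!ipxx ipDl !ipDr (ipC v u); ring. Qed.

Lemma normB2 u v : `|u - v| ^+ 2 = `|u| ^+ 2 - 2 * ip u v + `|v| ^+ 2.
Proof. by rewrite -!ipxx ipBl !ipBr (ipC v u); ring. Qed.

Lemma ip_polarization u v : ip u v = (`|u + v| ^+ 2 - `|u - v| ^+ 2) / 4.
Proof. by rewrite normD2 normB2; field. Qed.

Lemma parallelogram (u v : H) :
  `|u + v| ^+ 2 + `|u - v| ^+ 2 = 2 * `|u| ^+ 2 + 2 * `|v| ^+ 2.
Proof. by rewrite normD2 normB2; ring. Qed.

Lemma cvg_ip (T : Type) (F : set_system T) (FF : Filter F) (f g : T -> H) a b :
  f @ F --> a -> g @ F --> b -> (fun x => ip (f x) (g x)) @ F --> ip a b.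
Proof.
move=> fa gb; rewrite ip_polarization !expr2.
under eq_fun do rewrite ip_polarization !expr2.
have nD : (fun x => `|f x + g x|) @ F --> `|a + b| by apply: cvg_norm; apply: cvgD.
have nB : (fun x => `|f x - g x|) @ F --> `|a - b| by apply: cvg_norm; apply: cvgB.
by apply: cvgM; [apply: cvgB; apply: cvgM | apply: cvg_cst].
Qed.

Lemma ip_bound u v : `|ip u v| <= (`|u| + `|v|) ^+ 2.
Proof.
rewrite ip_polarization.
have h1 : `|u + v| <= `|u| + `|v| := ler_normD u v.
have h2 : `|u - v| <= `|u| + `|v| by rewrite -(normrN v) ler_normD.
have p1 : 0 <= `|u + v| by [].
have p2 : 0 <= `|u - v| by [].
rewrite ler_norml !expr2; apply/andP; split; nra.
Qed.

(* Minimizing |r - t u| at t = ip r u / (|u|^2 + 1) forces ip r u = 0. *)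
Lemma ip_eq0_of_norm_min r u : (forall t : R, `|r| <= `|r - t *: u|) -> ip r u = 0.
Proof.
move=> rmin; set c := ip r u; set N := `|u| ^+ 2.
have N0 : 0 <= N by rewrite sqr_ge0.
set t := c / (N + 1).
have ct : c = t * (N + 1) by rewrite /t mulfVK // gt_eqF // ltr_wpDl.
have h : `|r| ^+ 2 <= `|r - t *: u| ^+ 2 by rewrite lerXn2r // ?nnegrE.
rewrite normB2 ipZr -/c normrZ exprMn real_normK ?num_real // -/N in h.
have t0 : t = 0.
  apply/eqP; rewrite -sqrf_eq0 eq_le sqr_ge0 andbT.
  rewrite -(pmulr_lle0 _ (_ : 0 < N + 2)) ?ltr_wpDl //.
  rewrite ct !expr2 in h *; nra.
by rewrite ct t0 mul0r.
Qed.

Lemma orthogonal_dense_eq0 (T : Type) (io : T -> H) :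
  closure (range io) = setT -> forall a, (forall z, ip a (io z) = 0) -> a = 0.
Proof.
move=> io_dense a a_orth; apply: ip_eq0.
have [xs axs] := dense_seq io_dense a.
have to_ip : (fun n => ip a (io (xs n))) @ \oo --> ip a a.
  by apply: cvg_ip => //; apply: cvg_cst.
have to_0 : (fun n => ip a (io (xs n))) @ \oo --> (0 : R).
  by under eq_fun do rewrite a_orth; apply: cvg_cst.
exact: (cvg_unique _ to_ip to_0).
Qed.

End InnerProduct.

Section DenseRange.
Context (R : realType) (U : lmodType R) (H : completeNormedModType R).
Context (ip : H -> H -> R) (L : U -> H) (w : H).
Hypothesis Hip : inner_product ip.
Hypothesis L_lin : forall a x y, L (a *: x + y) = a *: L x + L y.

Let dist_set := range (fun z => `|w - L z|).
Let d := inf dist_set.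

Let has_inf_dist : has_inf dist_set.
Proof. by split; [exists `|w - L 0|; exists 0 | exists 0 => x [z _ <-]]. Qed.

Let d_le z : d <= `|w - L z|.
Proof. by apply: (ge_inf (proj2 has_inf_dist)); exists z. Qed.

Let d_ge0 : 0 <= d.
Proof. by apply: lb_le_inf; [case: has_inf_dist | move=> x [z _ <-]]. Qed.

(* The midpoint of L z1 and L z2 lies in the range of L, so it is at distance
   at least d from w. *)
Let sqr_norm_sub_le z1 z2 a b : `|w - L z1| <= a -> `|w - L z2| <= b ->
  `|L z1 - L z2| ^+ 2 <= 2 * a ^+ 2 + 2 * b ^+ 2 - 4 * d ^+ 2.
Proof.
move=> z1a z2b.
have := parallelogram Hip (w - L z1) (w - L z2).
have -> : w - L z1 + (w - L z2) = 2 *: (w - L (2^-1 *: (z1 + z2))).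
  rewrite (linZ L_lin) (linD L_lin) scalerBr scalerA mulfV // scale1r.
  by rewrite scalerDl scale1r opprD addrACA.
have -> : w - L z1 - (w - L z2) = - (L z1 - L z2).
  by rewrite opprB [RHS]opprB addrC addrA subrK.
rewrite normrZ normrN ger0_norm // => hp.
have q1 : `|w - L z1| ^+ 2 <= a ^+ 2.
  by rewrite lerXn2r ?nnegrE // (le_trans _ z1a).
have q2 : `|w - L z2| ^+ 2 <= b ^+ 2.
  by rewrite lerXn2r ?nnegrE // (le_trans _ z2b).
have q3 : d ^+ 2 <= `|w - L (2^-1 *: (z1 + z2))| ^+ 2.
  by rewrite lerXn2r ?nnegrE.
rewrite !expr2 in hp q1 q2 q3 *; nra.
Qed.

Let parallelogram_bound (a b c : R) : 0 <= a <= c -> 0 <= b <= c -> c <= 1 ->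
  2 * (d + a) ^+ 2 + 2 * (d + b) ^+ 2 - 4 * d ^+ 2 <= (8 * d + 4) * c.
Proof.
move=> /andP[a0 ac] /andP[b0 bc] c1.
have h1 : d * a <= d * c by rewrite ler_wpM2l.
have h2 : d * b <= d * c by rewrite ler_wpM2l.
rewrite !expr2; nra.
Qed.

Let minimizing_cvg (zs : nat -> U) :
  (forall n, `|w - L (zs n)| < d + n.+1%:R^-1) -> cvg ((fun n => L (zs n)) @ \oo).
Proof.
move=> zs_min; apply: cauchy_seq_cvg => e e0.
have k0 : 0 < 8 * d + 4 by rewrite ltr_wpDl // mulr_ge0.
have q0 : 0 < e ^+ 2 / (8 * d + 4) by rewrite divr_gt0 ?exprn_gt0.
have [N _ hN] := natinv_near q0.
exists N => n m Nn Nm.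
have le_par := sqr_norm_sub_le (ltW (zs_min n)) (ltW (zs_min m)).
have le_lin := @parallelogram_bound n.+1%:R^-1 m.+1%:R^-1 N.+1%:R^-1
  ltac:(by rewrite invr_ge0 ler0n natinv_le) ltac:(by rewrite invr_ge0 ler0n natinv_le)
  (natinv_le1 N).
have hb : `|L (zs n) - L (zs m)| ^+ 2 < e ^+ 2.
  apply: (le_lt_trans le_par); apply: (le_lt_trans le_lin).
  by rewrite mulrC -ltr_pdivlMr //; apply: hN => /=.
by rewrite -(ltr_pXn2r (_ : (0 < 2)%N)) ?nnegrE // ltW.
Qed.

Let residual_orthogonal (zs : nat -> U) m :
  (forall n, `|w - L (zs n)| < d + n.+1%:R^-1) ->
  (fun n => L (zs n)) @ \oo --> m -> forall z, ip (w - m) (L z) = 0.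
Proof.
move=> zs_min zs_m z; apply: (ip_eq0_of_norm_min Hip) => t.
have res_dist : `|w - m| <= d.
  apply/ler_addgt0Pr => e e0; have [k _ hk] := natinv_near e0.
  apply: (lim_le_from (u := fun n => `|w - L (zs n)|) (k := k)).
    by apply: cvg_norm; apply: cvgB => //; apply: cvg_cst.
  move=> n kn; apply: ltW; apply: (lt_le_trans (zs_min n)).
  by rewrite lerD2l; apply: le_trans (natinv_le kn) (ltW (hk k (leqnn k))).
apply: (le_trans res_dist); apply: (lim_ge (u := fun n => `|w - L (t *: z + zs n)|)).
  apply: cvg_norm.
  under eq_fun do rewrite L_lin opprD addrA.
  by rewrite addrAC; apply: cvgB => //; apply: cvg_cst.
by move=> n; apply: d_le.
Qed.

Lemma approx_range_of_orth_eq0 :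
  (forall r, (forall z, ip r (L z) = 0) -> r = 0) ->
  exists zs : nat -> U, (fun n => L (zs n)) @ \oo --> w.
Proof.
move=> orth_eq0.
have /choice [zs zs_min] : forall n : nat, exists z, `|w - L z| < d + n.+1%:R^-1.
  move=> n; have [_ [z _ <-] hz] := inf_adherent (ltac:(by []) : 0 < n.+1%:R^-1 :> R) has_inf_dist.
  by exists z.
exists zs; have zs_cvg := minimizing_cvg zs_min.
suff -> : w = lim ((fun n => L (zs n)) @ \oo) by [].
apply/eqP; rewrite -subr_eq0; apply/eqP/orth_eq0.
exact: residual_orthogonal zs_min zs_cvg.
Qed.

End DenseRange.

Lemma is_derive_scale_bounded_eq0 (R : realType) (c B : R) (f : R -> R) :
  c != 0 -> (forall t, is_derive t (1 : R) f (c * f t)) ->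
  (forall t, `|f t| <= B) -> f 0 = 0.
Proof.
move=> c0 f' fB.
have lin' t : is_derive t (1 : R) (fun u : R => - c * u) (- c).
  by have := is_deriveZ (- c) (@is_derive_id _ R t 1); rewrite /GRing.scale /= mulr1.
have exp' t : is_derive t (1 : R) (fun u => expR (- c * u)) (expR (- c * t) * - c).
  exact: (is_derive1_comp (is_derive_expR _) (lin' t)).
set g := fun t => f t * expR (- c * t).
have g' t : is_derive t (1 : R) g 0.
  apply: (is_derive_eq (is_deriveM (f' t) (exp' t))).
  by rewrite /GRing.scale /=; ring.
have g_cst t : g t = f 0.
  by rewrite (@is_derive_0_is_cst _ g t 0 g') /g mulr0 expR0 mulr1.
have growth T : `|f 0| * expR T <= B.
  have := g_cst (T / c); rewrite /g mulNr mulrCA divff // mulr1 => fT.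
  rewrite -(ger0_norm (expR_ge0 T)) -normrM.
  by rewrite -fT -mulrA -expRD addNr expR0 mulr1.
have B0 : 0 <= B := le_trans (normr_ge0 _) (fB 0).
apply/eqP; rewrite -normr_eq0 eq_le normr_ge0 andbT leNgt; apply/negP => f0_gt0.
have : `|f 0| * (1 + B / `|f 0|) <= B.
  by apply: le_trans (growth (B / `|f 0|)); rewrite ler_pM2l // expR_ge1Dx.
by rewrite mulrDr mulr1 mulrCA divff ?mulr1 ?gt_eqF //; lra.
Qed.

Section IsometricExtension.
Context (R : realType) (V : lmodType R) (H1 H2 : completeNormedModType R).
Context (ip1 : H1 -> H1 -> R) (ip2 : H2 -> H2 -> R) (i : V -> H1) (f : V -> H2).
Hypotheses (Hip1 : inner_product ip1) (Hip2 : inner_product ip2).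
Hypothesis i_lin : forall a x y, i (a *: x + y) = a *: i x + i y.
Hypothesis f_lin : forall a x y, f (a *: x + y) = a *: f x + f y.
Hypothesis i_dense : closure (range i) = setT.
Hypothesis f_ip : forall x y, ip2 (f x) (f y) = ip1 (i x) (i y).

Lemma isometry_norm_sub x y : `|f x - f y| = `|i x - i y|.
Proof.
apply/eqP; rewrite -(eqrXn2 (n := 2)) // -(ipxx Hip1) -(ipxx Hip2).
by rewrite -(linB f_lin) -(linB i_lin) f_ip.
Qed.

Definition extends_by_limits (F : H1 -> H2) := forall u (xs : nat -> V),
  (fun n => i (xs n)) @ \oo --> u -> (fun n => f (xs n)) @ \oo --> F u.

Lemma extension_by_limits_exists : exists F, extends_by_limits F.
Proof.
have /choice [sel sel_cvg] := dense_seq i_dense.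
have f_sel_cvg u : cvg ((fun n => f (sel u n)) @ \oo).
  by apply: (cvg_dominated (sel_cvg u)) => n m; rewrite isometry_norm_sub.
exists (fun u => lim ((fun n => f (sel u n)) @ \oo)) => u xs xs_u.
have diff0 : (fun n => f (xs n) - f (sel u n)) @ \oo --> 0.
  apply/cvgrPdist_lt => e e0.
  have : (fun n => i (xs n) - i (sel u n)) @ \oo --> 0.
    by rewrite -(subrr u); apply: cvgB.
  move=> /cvgrPdist_lt /(_ e e0); apply: filterS => n.
  by rewrite !sub0r !normrN isometry_norm_sub.
have -> : (fun n => f (xs n)) =
    (fun n => f (xs n) - f (sel u n)) + (fun n => f (sel u n)).
  by apply/funext => n /=; rewrite subrK.
by rewrite -[lim _]add0r; apply: cvgD.
Qed.

Variable F : H1 -> H2.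
Hypothesis F_ext : extends_by_limits F.

Lemma extension_eq x : F (i x) = f x.
Proof.
have const_f : (fun n : nat => f x) @ \oo --> f x by apply: cvg_cst.
exact: (cvg_unique _ (F_ext (cvg_cst (i x))) const_f).
Qed.

Lemma extension_lin a u v : F (a *: u + v) = a *: F u + F v.
Proof.
have [xs xs_u] := dense_seq i_dense u.
have [ys ys_v] := dense_seq i_dense v.
have lim_i : (fun n => i (a *: xs n + ys n)) @ \oo --> a *: u + v.
  under eq_fun do rewrite i_lin.
  by apply: cvgD => //; apply: cvgZ => //; apply: cvg_cst.
have lim_f : (fun n => f (a *: xs n + ys n)) @ \oo --> a *: F u + F v.
  under eq_fun do rewrite f_lin.
  by apply: cvgD; [apply: cvgZ; [apply: cvg_cst | apply: F_ext] | apply: F_ext].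
exact: (cvg_unique _ (F_ext lim_i) lim_f).
Qed.

Lemma extension_ip u v : ip2 (F u) (F v) = ip1 u v.
Proof.
have [xs xs_u] := dense_seq i_dense u.
have [ys ys_v] := dense_seq i_dense v.
have lim1 : (fun n => ip1 (i (xs n)) (i (ys n))) @ \oo --> ip1 u v.
  exact: cvg_ip.
have lim2 : (fun n => ip1 (i (xs n)) (i (ys n))) @ \oo --> ip2 (F u) (F v).
  by under eq_fun do rewrite -f_ip; apply: cvg_ip => //; apply: F_ext.
exact: (cvg_unique _ lim2 lim1).
Qed.

Lemma extension_norm_sub u v : `|F u - F v| = `|u - v|.
Proof.
apply/eqP; rewrite -(eqrXn2 (n := 2)) // -(ipxx Hip1) -(ipxx Hip2).
by rewrite -(linB extension_lin) extension_ip.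
Qed.

Lemma extension_bij : closure (range f) = setT -> bijective F.
Proof.
move=> f_dense.
have F_inj : injective F.
  by move=> u v /eqP; rewrite -subr_eq0 -normr_eq0 extension_norm_sub normr_eq0 subr_eq0 => /eqP.
have /choice [G FG] : forall w, exists u, F u = w.
  move=> w; have [ys ys_w] := dense_seq f_dense w.
  have i_cvg : cvg ((fun n => i (ys n)) @ \oo).
    by apply: (cvg_dominated ys_w) => n m; rewrite isometry_norm_sub.
  by exists (lim ((fun n => i (ys n)) @ \oo)); exact: (cvg_unique _ (F_ext i_cvg) ys_w).
by exists G => [u|w]; [apply: F_inj; rewrite FG | exact: FG].
Qed.

Lemma dense_range_of_extension (T : Type) (h : T -> V) :
  closure (range (fun y => f (h y))) = setT -> closure (range (fun y => i (h y))) = setT.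
Proof.
move=> fh_dense; rewrite predeqE => u; split => // _.
have [ys ys_Fu] := dense_seq fh_dense (F u).
apply: (@seq_closure _ _ (fun n => i (h (ys n)))); first by move=> n; exists (ys n).
apply/cvgrPdist_lt => e e0; move/cvgrPdist_lt : ys_Fu => /(_ e e0).
by apply: filterS => n; rewrite -extension_eq extension_norm_sub.
Qed.

End IsometricExtension.

Section ClosedGraph.
Context (R : realType) (V : Type) (H : normedModType R) (ip : H -> H -> R).
Context (io : V -> H) (T : V -> V).
Hypothesis Hip : inner_product ip.
Hypothesis T_skew : forall x y, ip (io (T x)) (io y) = - ip (io x) (io (T y)).

Lemma closed_graph_skew p : closed_graph io io T p ->
  forall y, ip p.2 (io y) = - ip p.1 (io (T y)).
Proof.
move=> /closure_seq [u [hu up]] y.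
have lim2 : (fun n => ip (u n).2 (io y)) @ \oo --> ip p.2 (io y).
  by apply: (cvg_ip Hip); [apply: (cvg_comp _ _ up); exact: cvg_snd | apply: cvg_cst].
have lim1 : (fun n => ip (u n).2 (io y)) @ \oo --> - ip p.1 (io (T y)).
  have -> : (fun n => ip (u n).2 (io y)) = fun n => - ip (u n).1 (io (T y)).
    by apply/funext => n; have [x _ <-] := hu n; rewrite /= T_skew.
  apply: cvgN; apply: (cvg_ip Hip); last exact: cvg_cst.
  by apply: (cvg_comp _ _ up); exact: cvg_fst.
exact: (cvg_unique _ lim2 lim1).
Qed.

Lemma closed_graph_is_graph : closure (range io) = setT ->
  is_graph (closed_graph io io T).
Proof.
move=> io_dense a b c ab ac; apply/eqP; rewrite -subr_eq0; apply/eqP.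
apply: (orthogonal_dense_eq0 Hip io_dense) => y.
by rewrite (ipBl Hip) (closed_graph_skew ab) (closed_graph_skew ac) subrr.
Qed.

Lemma closed_graph_kernel : closure (range (fun y => io (T y))) = setT ->
  forall a, closed_graph io io T (a, 0) -> a = 0.
Proof.
move=> Tio_dense a a0; apply: (orthogonal_dense_eq0 Hip Tio_dense) => y.
by apply/eqP; rewrite -oppr_eq0 -(closed_graph_skew a0) (ip0l Hip).
Qed.

Lemma closed_graph_range_dense : closure (range (fun y => io (T y))) = setT ->
  closure (op_range (closed_graph io io T)) = setT.
Proof.
move=> Tio_dense; rewrite predeqE => w; split => // _.
move: (Tio_dense); rewrite predeqE => /(_ w) [_ /(_ I)].
apply: closureS => _ [y _ <-].
by exists (io y); apply: subset_closure; exists y.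
Qed.

End ClosedGraph.

Section Oscillator.
Context (R : realType) (V : tvsType R) (omega : V -> V -> R).
Context (gamma : R -> V -> V) (D : V -> V).
Context (HQ : completeNormedModType R) (ipQ : HQ -> HQ -> R) (iotaQ eta : V -> HQ).
Hypothesis Homega : symplectic_form omega.
Hypothesis Hgamma : smooth_symplectic_action omega gamma.
Hypothesis HD : is_generator gamma D.
Hypothesis HVQ : hilbert_completion (Qform omega D) ipQ iotaQ.
Hypothesis Heta : forall x y, ipQ (eta x) (iotaQ y) = omega x y.

Let ipQ_inner : inner_product ipQ. Proof. by case: HVQ. Qed.
Let iotaQ_lin a x y : iotaQ (a *: x + y) = a *: iotaQ x + iotaQ y.
Proof. by case: HVQ. Qed.
Let ipQ_iota x y : ipQ (iotaQ x) (iotaQ y) = omega (D x) y.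
Proof. by case: HVQ. Qed.
Let iotaQ_dense : closure (range iotaQ) = setT.
Proof. by case: HVQ. Qed.

Let omega_linl a x y z : omega (a *: x + y) z = a * omega x z + omega y z.
Proof. by case: Homega. Qed.
Let omega_cont : continuous (fun p : V * V => (omega p.1 p.2 : R^o)).
Proof. by case: Homega. Qed.

Let omegaBl x y z : omega (x - y) z = omega x z - omega y z.
Proof. by rewrite addrC -scaleN1r omega_linl mulN1r addrC. Qed.

Let omega_anti x y : omega x y = - omega y x.
Proof.
case: Homega => _ linr xx _ _.
have Dl u v z : omega (u + v) z = omega u z + omega v z.
  by have := omega_linl 1 u v z; rewrite scale1r mul1r.
have Dr u v z : omega z (u + v) = omega z u + omega z v.
  by have := linr 1 u v z; rewrite scale1r mul1r.
by have := xx (x + y); rewrite Dl !Dr !xx; lra.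
Qed.

Let Q_sym x y : omega (D x) y = omega (D y) x.
Proof. by rewrite -!ipQ_iota (ipC ipQ_inner). Qed.

Lemma iotaQ_skew x y : ipQ (iotaQ (D x)) (iotaQ y) = - ipQ (iotaQ x) (iotaQ (D y)).
Proof. by rewrite !ipQ_iota Q_sym omega_anti. Qed.

Lemma eta_lin a x y : eta (a *: x + y) = a *: eta x + eta y.
Proof.
apply/eqP; rewrite -subr_eq0; apply/eqP.
apply: (orthogonal_dense_eq0 ipQ_inner iotaQ_dense) => z.
by rewrite (ipBl ipQ_inner) (ipDl ipQ_inner) (ipZl ipQ_inner) !Heta omega_linl subrr.
Qed.

Lemma etaD z : eta (D z) = iotaQ z.
Proof.
apply/eqP; rewrite -subr_eq0; apply/eqP.
apply: (orthogonal_dense_eq0 ipQ_inner iotaQ_dense) => w.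
by rewrite (ipBl ipQ_inner) Heta ipQ_iota subrr.
Qed.

Lemma kappa_skew x y : kappa ipQ eta (D x) y = - kappa ipQ eta x (D y).
Proof. by rewrite /kappa !etaD (ipC ipQ_inner) !Heta omega_anti. Qed.

Let eta_skew x y : ipQ (eta x) (iotaQ (D y)) = - ipQ (iotaQ x) (iotaQ y).
Proof. by rewrite Heta ipQ_iota omega_anti Q_sym. Qed.

(* A tvsType need not be Hausdorff: limits in V are unique because omega
   separates points. *)
Let cvgV_unique (T : Type) (F : set_system T) (FF : ProperFilter F) (f : T -> V) (a b : V) :
  f @ F --> a -> f @ F --> b -> a = b.
Proof.
case: Homega => _ _ _ _ omega_nondeg fa fb.
apply/eqP; rewrite -subr_eq0; apply/eqP/omega_nondeg => y.
have lim_omega c : f @ F --> c -> (fun t => omega (f t) y) @ F --> omega c y.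
  move=> fc; exact: (@continuous2_cvg _ _ _ _ F _ f (fun=> y)
    (fun u v => (omega u v : R^o)) c y (@omega_cont (c, y)) fc (cvg_cst y)).
apply/eqP; rewrite omegaBl subr_eq0; apply/eqP.
exact: (cvg_unique _ (lim_omega a fa) (lim_omega b fb)).
Qed.

Let cvgV_lin (T : Type) (F : set_system T) (FF : Filter F) (f g : T -> V) a (x y : V) :
  f @ F --> x -> g @ F --> y -> (fun t => a *: f t + g t) @ F --> a *: x + y.
Proof.
move=> fx gy.
have afx : (fun t => a *: f t) @ F --> a *: x.
  exact: (@continuous2_cvg _ _ _ _ F _ (fun=> (a : R^o)) f (fun (u : R^o) (v : V) => u *: v)
    a x (@scale_continuous R V (a, x)) (cvg_cst (a : R^o)) fx).
exact: (@continuous2_cvg _ _ _ _ F _ _ g (fun u v : V => u + v) _ y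
  (@add_continuous V (a *: x, y)) afx gy).
Qed.

Let gamma_lin t a x y : gamma t (a *: x + y) = a *: gamma t x + gamma t y.
Proof. by case: Hgamma. Qed.
Let gammaD s t x : gamma (s + t) x = gamma s (gamma t x).
Proof. by case: Hgamma. Qed.

Let dquot (x : V) (h : R) : V := h^-1 *: (gamma h x - x).

Let D_lin a x y : D (a *: x + y) = a *: D x + D y.
Proof.
apply: (@cvgV_unique _ (0^' : set_system R) _ (dquot (a *: x + y))); first exact: HD.
have -> : dquot (a *: x + y) = fun h => a *: dquot x h + dquot y h.
  apply/funext => h; rewrite /dquot gamma_lin scalerA mulrC -scalerA -scalerDr.
  by rewrite opprD addrACA -scalerBr.
by apply: cvgV_lin; apply: HD.
Qed.

Let D_gamma t x : D (gamma t x) = gamma t (D x).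
Proof.
apply: (@cvgV_unique _ (0^' : set_system R) _ (dquot (gamma t x))); first exact: HD.
have -> : dquot (gamma t x) = fun h => gamma t (dquot x h).
  apply/funext => h; rewrite /dquot (linZ (gamma_lin t)) (linB (gamma_lin t)).
  by rewrite -gammaD [h + t]addrC gammaD.
case: Hgamma => _ [gamma_cont _] _ _ _.
by apply: continuous_cvg; [apply: gamma_cont | apply: HD].
Qed.

Let normQ z : `|iotaQ z| ^+ 2 = omega (D z) z.
Proof. by rewrite -(ipxx ipQ_inner) ipQ_iota. Qed.

Let normQ_gamma t y : `|iotaQ (gamma t y)| = `|iotaQ y|.
Proof.
apply/eqP; rewrite -(eqrXn2 (n := 2)) // !normQ D_gamma.
by case: Hgamma => _ [_ ->].
Qed.

Let cvgV_sub_lim (T : Type) (F : set_system T) (FF : Filter F) (f : T -> V) (x : V) :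
  f @ F --> x -> (fun t => f t - x) @ F --> 0.
Proof.
move=> fx; suff : (fun t => 1 *: f t + - x) @ F --> 1 *: x + - x.
  by rewrite scale1r subrr; under eq_fun do rewrite scale1r.
by apply: cvgV_lin => //; apply: cvg_cst.
Qed.

(* Difference quotients converge in the Q-norm, since |iotaQ z|^2 = omega (D z) z
   and omega is continuous on V. *)
Let cvg_iotaQ_dquot w : (fun h => iotaQ (dquot w h)) @ 0^' --> iotaQ (D w).
Proof.
have lim1 : (fun h => D (dquot w h - D w)) @ 0^' --> 0.
  have -> : (fun h => D (dquot w h - D w)) = fun h => dquot (D w) h - D (D w).
    by apply/funext => h; rewrite (linB D_lin) /dquot (linZ D_lin) (linB D_lin) D_gamma.
  exact: (@cvgV_sub_lim _ _ _ _ _ (@HD (D w))).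
have lim2 : (fun h => dquot w h - D w) @ 0^' --> 0.
  exact: (@cvgV_sub_lim _ _ _ _ _ (@HD w)).
have err0 : (fun h => omega (D (dquot w h - D w)) (dquot w h - D w)) @ 0^' --> omega 0 0.
  exact: (@continuous2_cvg _ _ _ _ _ _ _ _ (fun u v => (omega u v : R^o)) 0 0
    (@omega_cont (0, 0)) lim1 lim2).
case: Homega => _ _ omega_xx _ _; rewrite omega_xx in err0.
apply/cvgrPdist_lt => e e0.
move/cvgrPdist_lt : err0 => /(_ (e ^+ 2) (exprn_gt0 _ e0)).
apply: filterS => h /=; rewrite sub0r normrN => err_lt.
rewrite -normrN opprB -(linB iotaQ_lin) -(ltr_pXn2r (_ : (0 < 2)%N)) ?nnegrE ?(ltW e0) //.
by rewrite normQ (le_lt_trans (ler_norm _) err_lt).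
Qed.

Let is_derive_orbit r y t : is_derive t (1 : R)
  (fun t => ipQ r (iotaQ (gamma t y))) (ipQ r (iotaQ (D (gamma t y)))).
Proof.
set f := fun t => ipQ r (iotaQ (gamma t y)).
have f_dquot : (fun h : R => h^-1 *: ((f \o shift t) (h *: 1) - f t)) =
    fun h => ipQ r (iotaQ (dquot (gamma t y) h)).
  apply/funext => h; rewrite /f /= /dquot (linZ iotaQ_lin) (linB iotaQ_lin).
  have -> : h%:A = h by rewrite /GRing.scale /= mulr1.
  by rewrite (ipZr ipQ_inner) (ipBr ipQ_inner) gammaD.
have f_cvg : (fun h : R => h^-1 *: ((f \o shift t) (h *: 1) - f t)) @ 0^' -->
    ipQ r (iotaQ (D (gamma t y))).
  by rewrite f_dquot; apply: (cvg_ip ipQ_inner); [apply: cvg_cst | apply: cvg_iotaQ_dquot].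
apply: DeriveDef; first by apply/cvg_ex; exists (ipQ r (iotaQ (D (gamma t y)))).
exact: (cvg_lim _ f_cvg).
Qed.

Let orth_range_DZ_eq0 s r : s != 0 ->
  (forall z, ipQ r (iotaQ (D z + s *: z)) = 0) -> r = 0.
Proof.
move=> s0 r_orth; apply: (orthogonal_dense_eq0 ipQ_inner iotaQ_dense) => y.
have := @is_derive_scale_bounded_eq0 R (- s) ((`|r| + `|iotaQ y|) ^+ 2)
  (fun t => ipQ r (iotaQ (gamma t y))).
case: Hgamma => _ _ gamma0 _ _; rewrite gamma0; apply.
- by rewrite oppr_eq0.
- move=> t; apply: (is_derive_eq (is_derive_orbit r y t)).
  have := r_orth (gamma t y); rewrite (linD iotaQ_lin) (linZ iotaQ_lin) (ipDr ipQ_inner) (ipZr ipQ_inner).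
  by lra.
- by move=> t; rewrite -(normQ_gamma t y); apply: (ip_bound ipQ_inner).
Qed.

Let approx_range_DZ s (w : HQ) : s != 0 ->
  exists zs : nat -> V, (fun n => iotaQ (D (zs n) + s *: zs n)) @ \oo --> w.
Proof.
move=> s0; apply: (approx_range_of_orth_eq0 (L := fun z => iotaQ (D z + s *: z))
  w ipQ_inner) => [a x y|r]; last first.
  exact: orth_range_DZ_eq0.
by rewrite D_lin scalerDr scalerA mulrC -scalerA addrACA -scalerDr iotaQ_lin.
Qed.

Let normQ_DsubZ z :
  `|iotaQ (D z + (-1) *: z)| ^+ 2 = `|iotaQ (D z)| ^+ 2 + `|iotaQ z| ^+ 2.
Proof.
have DQ_orth : ipQ (iotaQ (D z)) (iotaQ z) = 0.
  by have := iotaQ_skew z z; rewrite (ipC ipQ_inner (iotaQ z)); lra.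
by rewrite scaleN1r (linB iotaQ_lin) (normB2 ipQ_inner) DQ_orth; ring.
Qed.

(* D - 1 has dense range in V_Q and controls both iotaQ z and iotaQ (D z), so
   every vector is v - u for some (u, v) in the closed graph. *)
Let closed_graph_Dsub1_onto (w : HQ) :
  exists u v, closed_graph iotaQ iotaQ D (u, v) /\ v - u = w.
Proof.
pose L z := iotaQ (D z + (-1) *: z).
have [zs zs_w] := @approx_range_DZ (-1) w ltac:(by rewrite oppr_eq0 oner_eq0).
have L_sub z1 z2 : L z1 - L z2 = L (z1 - z2).
  by rewrite /L -(linB iotaQ_lin) (linB D_lin) scalerBr opprD addrACA.
have L_dom z : `|iotaQ z| <= `|L z| /\ `|iotaQ (D z)| <= `|L z|.
  by split; rewrite -(ler_pXn2r (_ : (0 < 2)%N)) ?nnegrE // normQ_DsubZ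
    ?lerDl ?lerDr sqr_ge0.
have u_cvg : cvg ((fun n => iotaQ (zs n)) @ \oo).
  apply: (cvg_dominated zs_w) => n m.
  by rewrite L_sub -(linB iotaQ_lin); case: (L_dom (zs n - zs m)).
have v_cvg : cvg ((fun n => iotaQ (D (zs n))) @ \oo).
  apply: (cvg_dominated zs_w) => n m.
  by rewrite L_sub -(linB iotaQ_lin) -(linB D_lin); case: (L_dom (zs n - zs m)).
exists (lim ((fun n => iotaQ (zs n)) @ \oo)), (lim ((fun n => iotaQ (D (zs n))) @ \oo)).
split.
  apply: (@seq_closure _ _ (fun n => (iotaQ (zs n), iotaQ (D (zs n))))).
    by move=> n; exists (zs n).
  exact: cvg_pair.
have vu_lim : (fun n => iotaQ (D (zs n) + (-1) *: zs n)) @ \oo -->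
    lim ((fun n => iotaQ (D (zs n))) @ \oo) - lim ((fun n => iotaQ (zs n)) @ \oo).
  have -> : (fun n => iotaQ (D (zs n) + (-1) *: zs n)) =
      fun n => iotaQ (D (zs n)) - iotaQ (zs n).
    by apply/funext => n; rewrite scaleN1r (linB iotaQ_lin).
  exact: cvgB.
exact: (cvg_unique _ vu_lim zs_w).
Qed.

Lemma eta_in_closed_graph x : closed_graph iotaQ iotaQ D (eta x, iotaQ x).
Proof.
(* u - eta x = v - x is orthogonal to the range of D + 1. *)
have [u [v [uv_graph vu]]] := closed_graph_Dsub1_onto (iotaQ x - eta x).
suff u_eta : u = eta x.
  have v_x : v = iotaQ x by rewrite -[v](subrK u) vu u_eta subrK.
  by rewrite -u_eta -v_x.
apply/eqP; rewrite -subr_eq0; apply/eqP.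
apply: (@orth_range_DZ_eq0 1) => [|y]; first exact: oner_neq0.
have := closed_graph_skew ipQ_inner iotaQ_skew uv_graph y.
rewrite /= -[v](subrK u) vu (ipDl ipQ_inner (iotaQ x - eta x)).
rewrite scale1r (linD iotaQ_lin) (ipDr ipQ_inner) !(ipBl ipQ_inner).
by have := eta_skew x y; lra.
Qed.

Lemma etaD_dense : closure (range (fun x => eta (D x))) = setT.
Proof. by rewrite (_ : (fun x => eta (D x)) = iotaQ) //; apply/funext => x; exact: etaD. Qed.

Lemma eta_dense : closure (range eta) = setT.
Proof.
rewrite predeqE => w; split => // _; move: etaD_dense; rewrite predeqE => /(_ w) [_].
by move=> /(_ I); apply: closureS => _ [x _ <-]; exists (D x).
Qed.

End Oscillator.

Unset Implicit Arguments.

Theorem lemma3p10 (R : realType) (V : tvsType R) (omega : V -> V -> R)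
  (gamma : R -> V -> V) (D : V -> V)
  (Homega : symplectic_form omega)
  (Hgamma : smooth_symplectic_action omega gamma)
  (HD : is_generator gamma D)
  (* (C1) Q is positive definite *)
  (C1 : forall x : V, x != 0 -> 0 < Qform omega D x x)
  (* (C2) all omega(x, .) are Q-continuous *)
  (C2 : forall x : V, Q_continuous (Qform omega D) (omega x))
  (* V_Q : Hilbert completion of (V, Q), containing V via iotaQ *)
  (HQ : completeNormedModType R) (ipQ : HQ -> HQ -> R) (iotaQ : V -> HQ)
  (HVQ : hilbert_completion (Qform omega D) ipQ iotaQ)
  (* (C3) eta : V -> V_Q with Q(eta x, y) = omega(x, y) is continuous *)
  (eta : V -> HQ)
  (Heta : forall x y : V, ipQ (eta x) (iotaQ y) = omega x y)
  (C3 : continuous eta)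
  (* V_kappa : Hilbert completion of (V, kappa), kappa(x,y) = Q(eta x, eta y) *)
  (Hk : completeNormedModType R) (ipk : Hk -> Hk -> R) (iotak : V -> Hk)
  (HVk : hilbert_completion (kappa ipQ eta) ipk iotak) :
  let DbarQ := closed_graph iotaQ iotaQ D in
  let Dbark := closed_graph iotak iotak D in
  [/\ (* D is closable in V_Q, eta(V) lies in dom(Dbar) and Dbar (eta x) = x *)
      is_graph DbarQ,
      (forall x : V, DbarQ (eta x, iotaQ x)),
      (* eta : (V, kappa) -> (eta(V), Q) is isometric *)
      (forall x y : V, ipQ (eta x) (eta y) = kappa ipQ eta x y),
      (* eta extends to an isomorphism of real Hilbert spaces V_kappa -> V_Q,
         and intertwines D on V_kappa with Dbar restricted to eta(V) *)
      (exists etah : Hk -> HQ,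
         [/\ (forall a u v, etah (a *: u + v) = a *: etah u + etah v),
             bijective etah,
             (forall u v, ipQ (etah u) (etah v) = ipk u v),
             (forall x : V, etah (iotak x) = eta x)
           & (forall x : V, DbarQ (etah (iotak x), etah (iotak (D x))))])
    & (* the closure of D in V_kappa is an injective operator with dense range *)
      [/\ is_graph Dbark,
          (forall a : Hk, Dbark (a, 0) -> a = 0)
        & closure (op_range Dbark) = setT]].
Proof.
move=> DbarQ Dbark.
have [ipQ_inner _ _ iotaQ_dense] := HVQ.
have [ipk_inner iotak_lin ipk_iota iotak_dense] := HVk.
have eta_ip x y : ipQ (eta x) (eta y) = ipk (iotak x) (iotak y) by rewrite ipk_iota.
have iotak_skew x y : ipk (iotak (D x)) (iotak y) = - ipk (iotak x) (iotak (D y)).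
  by rewrite !ipk_iota (kappa_skew Homega HVQ Heta).
have eta_lin := eta_lin Homega HVQ Heta.
have [etah etah_ext] := extension_by_limits_exists ipk_inner ipQ_inner iotak_lin eta_lin
  iotak_dense eta_ip.
have etah_eta := extension_eq etah_ext.
have iotakD_dense := dense_range_of_extension ipk_inner ipQ_inner iotak_lin eta_lin
  iotak_dense eta_ip etah_ext (etaD_dense HVQ Heta).
split => //.
- exact: (closed_graph_is_graph ipQ_inner (iotaQ_skew Homega HVQ) iotaQ_dense).
- exact: (eta_in_closed_graph Homega Hgamma HD HVQ Heta).
- exists etah; split => [a u v | | u v | x | x].
  + exact: (extension_lin iotak_lin eta_lin iotak_dense etah_ext).
  + exact: (extension_bij ipk_inner ipQ_inner iotak_lin eta_lin iotak_dense eta_ip etah_ext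
      (eta_dense HVQ Heta)).
  + exact: (extension_ip ipk_inner ipQ_inner iotak_dense eta_ip etah_ext).
  + exact: etah_eta.
  + rewrite !etah_eta (etaD HVQ Heta).
    exact: (eta_in_closed_graph Homega Hgamma HD HVQ Heta).
- split.
  + exact: (closed_graph_is_graph ipk_inner iotak_skew iotak_dense).
  + exact: (closed_graph_kernel ipk_inner iotak_skew iotakD_dense).
  + exact: (closed_graph_range_dense iotakD_dense).
Qed.
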